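(* Let $\mathbb{F}\in\{\mathbb{R},\mathbb{C}\}$, let $A_1,A_2,\ldots$ be a sequence of matrices in $\mathbb{F}^{n\times n}$, and let $\mu$ be a matrix norm on $\mathbb{F}^{n\times n}$. Suppose that $\sum_{i=1}^\infty(\max(\mu(A_i),1)-1)$ converges. Then all general products from $A_1,A_2,\ldots$ are bounded: for every permutation $\sigma$ of the positive integers, every integer $p\ge 0$, and every sequence $(C_{p,r})_{r\ge1}$ of general products as defined below, there is a constant $M$ with $\mu(C_{p,r})\le M$ for all $r\ge 1$.
   Context: A matrix norm is a submultiplicative norm on $\mathbb{F}^{n\times n}$. General products: given a permutation $\sigma$ of the positive integers, set $B_i=A_{\sigma(i)}$; for an integer $p\ge0$ and each $r\ge1$, $C_{p,r}$ is a product of the matrices $B_{p+1},\ldots,B_{p+r}$, each used exactly once, taken in some order (the order may be chosen arbitrarily and independently for each $r$). *)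

From mathcomp Require Import all_boot all_algebra.
From mathcomp Require Import all_classical all_reals all_analysis.
From mathcomp.real_closed Require Import complex.
Import numFieldNormedType.Exports.
Import fingroup.perm GRing.Theory Num.Theory.
Local Open Scope ring_scope.

(* The field F is either R (a realType)
   or its complexification R[i]; absF : F -> R is the absolute value of F
   (normr on R, normc on R[i]).  Matrix norms are real-valued. *)

Definition matrix_norm {R : realType} {F : pzRingType} (absF : F -> R) {n : nat}
    (mu : matrix F n n -> R) : Prop :=
  [/\ forall A, 0 <= mu A,
      forall A, mu A = 0 -> A = 0,
      forall (c : F) A, mu (c *: A) = absF c * mu A,
      forall A B, mu (A + B) <= mu A + mu B
    & forall A B, mu (A *m B) <= mu A * mu B].

(* Product of the r matrices B_{p+1},...,B_{p+r} (0-indexed: B p, ..., B (p+r-1))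
   taken in the order given by tau : perm_of (ordinal r). *)
Definition ordered_product {F : pzRingType} {n : nat} (B : nat -> matrix F n n)
    (p : nat) (r : nat) (tau : perm_of (ordinal r)) : matrix F n n :=
  \big[mulmx/1%:M]_(j < r) B (p + tau j)%N.

(* Conclusion + hypotheses of Proposition 3.1 for a given field F.
   Sequences A_1, A_2, ... are indexed from 0 (A i = A_{i+1}); a permutation
   of the positive integers is a bijection of nat. *)
Definition general_products_bounded {R : realType} {F : pzRingType}
    (absF : F -> R) : Prop :=
  forall (n : nat) (A : nat -> matrix F n n) (mu : matrix F n n -> R),
    matrix_norm absF mu ->
    cvgn (series (fun i => Num.max (mu (A i)) 1 - 1)) ->
    forall (sigma : nat -> nat), bijective sigma ->
    forall (p : nat) (C : nat -> matrix F n n),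
      (forall r : nat, (1 <= r)%N ->
         exists tau : perm_of (ordinal r), C r = ordered_product (fun i => A (sigma i)) p r tau) ->
      exists M : R, forall r : nat, (1 <= r)%N -> mu (C r) <= M.

From mathcomp Require Import all_boot all_algebra.
From mathcomp Require Import all_classical all_reals all_analysis.
From mathcomp.real_closed Require Import complex.
Import numFieldNormedType.Exports.
Import mathcomp.order.order.Order.TTheory fingroup.perm GRing.Theory Num.Theory.
Local Open Scope ring_scope.

(* Submultiplicativity gives mu (C) <= mu (1) * prod_i mu (A_i) over the r
   distinct indices i used by C.  Each factor is at most
   exp (max (mu (A_i), 1) - 1) = exp (a_i), so mu (C) <= mu (1) * exp (sum a_i);
   as the a_i are nonnegative and the indices distinct, the exponent is at most
   the sum of the convergent series, a bound independent of r. *)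

Lemma matrix_norm_bigmul_le {R : realType} {F : pzRingType} {absF : F -> R}
    {n : nat} {mu : 'M[F]_n -> R} r (f : 'I_r -> 'M[F]_n) :
  matrix_norm absF mu ->
  mu (\big[mulmx/1%:M]_(j < r) f j) <= mu 1%:M * \prod_(j < r) mu (f j).
Proof.
case=> mu_ge0 _ _ _ muM; elim: r f => [|r IHr] f; first by rewrite !big_ord0 mulr1.
rewrite !big_ord_recl mulrCA; apply: le_trans (muM _ _) _.
by rewrite ler_wpM2l.
Qed.

Lemma le_expR_max1 (R : realType) (x : R) : x <= expR (Num.max x 1 - 1).
Proof.
apply: le_trans (expR_ge1Dx _); rewrite addrC subrK.
by rewrite le_max lexx.
Qed.

Lemma ler_sum_inj_ord {R : realType} {a : nat -> R} {r K} {g : 'I_r -> nat} :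
  injective g -> (forall j, (g j < K)%N) -> (forall k, 0 <= a k) ->
  \sum_(j < r) a (g j) <= \sum_(k < K) a k.
Proof.
move=> g_inj gK a_ge0.
pose gK' j : 'I_K := Ordinal (gK j).
have gK'_inj : injective gK' by move=> i j /(congr1 val) /g_inj.
have -> : \sum_(j < r) a (g j) = \sum_(k in gK' @: [set: 'I_r]) a k.
  by rewrite (big_imset _ (in2W gK'_inj)); apply: eq_bigl => j; rewrite inE.
rewrite big_mkcond /=; apply: ler_sum => k _.
by case: ifP.
Qed.

Lemma ler_sum_inj_series {R : realType} {a : nat -> R} {r} {g : 'I_r -> nat} :
  injective g -> (forall k, 0 <= a k) -> cvgn (series a) ->
  \sum_(j < r) a (g j) <= limn (series a).
Proof.
move=> g_inj a_ge0 a_cvg.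
have gK j : (g j < (\max_(i < r) g i).+1)%N by rewrite ltnS leq_bigmax.
apply: le_trans (ler_sum_inj_ord g_inj gK a_ge0) _.
rewrite -(big_mkord xpredT a); apply: nondecreasing_cvgn_le a_cvg _.
exact: nondecreasing_series.
Qed.

Lemma pzRing_general_products_bounded (R : realType) (F : pzRingType)
    (absF : F -> R) :
  general_products_bounded absF.
Proof.
move=> n A mu mu_norm a_cvg sigma sigma_bij p C C_prod.
set a := fun i => Num.max (mu (A i)) 1 - 1.
have a_ge0 k : 0 <= a k by rewrite subr_ge0 le_max lexx orbT.
exists (mu 1%:M * expR (limn (series a))) => r r_gt0.
have [tau ->] := C_prod r r_gt0.
apply: le_trans (matrix_norm_bigmul_le _ _ mu_norm) _.
have mu_ge0 : forall B, 0 <= mu B by case: mu_norm.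
apply: ler_wpM2l; first exact: mu_ge0.
pose g := fun j : 'I_r => sigma (p + tau j)%N.
have g_inj : injective g.
  move=> i j /(bij_inj sigma_bij) /addnI /val_inj; exact: perm_inj.
apply: le_trans (_ : \prod_(j < r) expR (a (g j)) <= _).
  by apply: ler_prod => j _; rewrite mu_ge0 le_expR_max1.
by rewrite -expR_sum ler_expR; apply: ler_sum_inj_series.
Qed.

Theorem proposition3p1 (R : realType) :
  general_products_bounded (fun x : R => `|x|%R) /\
  general_products_bounded (@Normc.normc R).
Proof. by split; apply: pzRing_general_products_bounded. Qed.
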